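(* For $k\in\mathbb{N}$ let $C(k)=\dfrac{2\,(4^{k}-3k-1)}{(2k+1)!}$. (i) For every $x\in(0,\pi/2)$ and every $n\in\mathbb{N}$, $$3+\frac{1}{\cos x}\sum_{k=2}^{2n+1}(-1)^{k}C(k)\,x^{2k}<2\,\frac{\sin x}{x}+\frac{\tan x}{x}<3+\frac{1}{\cos x}\sum_{k=2}^{2n}(-1)^{k}C(k)\,x^{2k}.$$ (ii) For every $x\in(0,\pi/2)$ and every integer $m\ge 2$, $$\Big|\,2\,\frac{\sin x}{x}+\frac{\tan x}{x}-\Big(3+\frac{1}{\cos x}\sum_{k=2}^{m}(-1)^{k}C(k)\,x^{2k}\Big)\Big|<C(m+1)\,\frac{x^{2m+2}}{\cos x}.$$
   Context: $\mathbb{N}=\{1,2,3,\dots\}$. *)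

From Stdlib Require Import Reals Lra Lia Arith Factorial.
Open Scope R_scope.

Definition Ccoef (k : nat) : R :=
  2 * (4 ^ k - 3 * INR k - 1) / INR (fact (2 * k + 1)).

Fixpoint psum (x : R) (N : nat) : R :=
  match N with
  | O => 0
  | S N' => psum x N' + (if (2 <=? N)%nat then (-1) ^ N * Ccoef N * x ^ (2 * N) else 0)
  end.

Definition approx (x : R) (N : nat) : R := 3 + / cos x * psum x N.

(* Multiplying out, [2 sin x / x + tan x / x - 3 = (sin 2x + sin x - 3 x cos x) / (x cos x)], and the
   Taylor series of the numerator divided by [x] is [sum_(k >= 2) (-1)^k C(k) x^(2k)]: the
   coefficients of [x^(2k)] in [sin 2x / x], [sin x / x] and [3 cos x] add up to [C(k)], and vanish
   for [k = 0, 1].  For [0 < x < 2] the terms [C(k) x^(2k)] decrease geometrically, since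
   [C(k+1) <= C(k) / 7] and [x^2 < 4], so the strict Leibniz bounds for alternating series give
   both claims once everything is divided by [cos x > 0]. *)
From Stdlib Require Import Reals Lra Lia Factorial.
Open Scope R_scope.

Lemma Un_cv_const (c : R) : Un_cv (fun _ => c) c.
Proof.
  intros eps eps_pos; exists 0%nat; intros n _.
  unfold R_dist; rewrite Rminus_diag, Rabs_R0; exact eps_pos.
Qed.

Lemma Un_cv0_of_ratio (U : nat -> R) (q : R) :
  0 <= q < 1 -> (forall n, 0 <= U n) -> (forall n, U (S n) <= q * U n) -> Un_cv U 0.
Proof.
  intros hq U_ge0 U_ratio.
  assert (U_geom : forall n, U n <= q ^ n * U 0%nat).
  { induction n as [|n IH]; simpl; [lra|].
    specialize (U_ratio n); nra. }
  intros eps eps_pos.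
  assert (U0_ge0 := U_ge0 0%nat).
  destruct (pow_lt_1_zero q ltac:(rewrite Rabs_right; lra) (eps / (U 0%nat + 1)))
    as [N HN].
  { apply Rdiv_lt_0_compat; lra. }
  exists N; intros n hn.
  specialize (HN n hn); rewrite Rabs_right in HN by (apply Rle_ge, pow_le; lra).
  unfold R_dist; rewrite Rminus_0_r, Rabs_right by (apply Rle_ge, U_ge0).
  assert (q ^ n * (U 0%nat + 1) < eps).
  { apply Rmult_lt_compat_r with (r := U 0%nat + 1) in HN; [|lra].
    unfold Rdiv in HN; rewrite Rmult_assoc, Rinv_l in HN; lra. }
  assert (0 <= q ^ n) by (apply pow_le; lra).
  specialize (U_geom n); nra.
Qed.

Section AlternatedSeries.

Variables (U : nat -> R) (l : R).
Hypothesis U_decreasing : forall n, U (S n) < U n.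
Hypothesis U_cv0 : Un_cv U 0.
Hypothesis U_alt_cv : Un_cv (fun N => sum_f_R0 (tg_alt U) N) l.

Lemma alternated_series_ineq_strict (N : nat) :
  sum_f_R0 (tg_alt U) (S (2 * N)) < l < sum_f_R0 (tg_alt U) (2 * N).
Proof.
  assert (U_decr : Un_decreasing U) by (intro n; left; apply U_decreasing).
  destruct (alternated_series_ineq U l (S N) U_decr U_cv0 U_alt_cv) as [lo hi].
  replace (2 * S N)%nat with (S (S (2 * N))) in lo, hi by lia.
  rewrite !tech5 in lo, hi; unfold tg_alt in *; cbn [pow] in lo, hi.
  rewrite !pow_1_even in lo, hi.
  pose proof (U_decreasing (S (2 * N))); pose proof (U_decreasing (S (S (2 * N)))).
  lra.
Qed.

Lemma alternated_series_error (N : nat) :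
  Rabs (l - sum_f_R0 (tg_alt U) N) < U (S N).
Proof.
  destruct (Nat.Even_or_Odd N) as [[j ->] | [j ->]].
  - destruct (alternated_series_ineq_strict j) as [lo hi].
    rewrite tech5 in lo; unfold tg_alt in *; cbn [pow] in lo; rewrite pow_1_even in lo.
    apply Rabs_def1; lra.
  - replace (2 * j + 1)%nat with (S (2 * j)) by lia.
    destruct (alternated_series_ineq_strict j) as [lo _].
    destruct (alternated_series_ineq_strict (S j)) as [_ hi].
    replace (2 * S j)%nat with (S (S (2 * j))) in hi by lia.
    rewrite tech5 in hi; unfold tg_alt in *; cbn [pow] in hi; rewrite pow_1_even in hi.
    apply Rabs_def1; lra.
Qed.

End AlternatedSeries.

Lemma fact_odd (k : nat) : INR (fact (2 * k + 1)) = (2 * INR k + 1) * INR (fact (2 * k)).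
Proof.
  replace (2 * k + 1)%nat with (S (2 * k)) by lia.
  rewrite fact_simpl, mult_INR, S_INR, mult_INR; simpl; ring.
Qed.

Lemma fact_odd_succ (k : nat) :
  INR (fact (2 * S k + 1)) = (2 * INR k + 3) * (2 * INR k + 2) * INR (fact (2 * k + 1)).
Proof.
  replace (2 * S k + 1)%nat with (S (S (2 * k + 1))) by lia.
  rewrite 2!fact_simpl, !mult_INR, !S_INR, plus_INR, mult_INR; simpl; ring.
Qed.

Lemma pow4_ge (k : nat) : (2 <= k)%nat -> 15 * INR k + 2 <= 2 * 4 ^ k.
Proof.
  induction 1 as [|k hk IH]; [simpl; lra|].
  apply le_INR in hk; rewrite S_INR; simpl (4 ^ S k); simpl in hk; lra.
Qed.

Lemma Ccoef_pos (k : nat) : (2 <= k)%nat -> 0 < Ccoef k.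
Proof.
  intro hk; unfold Ccoef.
  pose proof (pow4_ge k hk); apply le_INR in hk; simpl in hk.
  apply Rdiv_lt_0_compat; [lra | apply lt_0_INR, lt_O_fact].
Qed.

(* From [4^(k+1) - 3(k+1) - 1 <= 6 (4^k - 3k - 1)] and [(2k+2)(2k+3) >= 42]. *)
Lemma Ccoef_succ_le (k : nat) : (2 <= k)%nat -> 7 * Ccoef (S k) <= Ccoef k.
Proof.
  intro hk; unfold Ccoef.
  pose proof (pow4_ge k hk) as hpow; apply le_INR in hk; simpl in hk.
  rewrite fact_odd_succ, S_INR; simpl (4 ^ S k).
  assert (hF : 0 < INR (fact (2 * k + 1))) by apply lt_0_INR, lt_O_fact.
  set (P := 4 ^ k) in *; set (K := INR k) in *; set (F := INR (fact (2 * k + 1))) in *.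
  assert (hnum : 4 * P - 3 * (K + 1) - 1 <= 6 * (P - 3 * K - 1)) by lra.
  assert (hden : 42 <= (2 * K + 3) * (2 * K + 2)) by nra.
  replace (7 * (2 * (4 * P - 3 * (K + 1) - 1) / ((2 * K + 3) * (2 * K + 2) * F)))
    with (2 * (7 * (4 * P - 3 * (K + 1) - 1) / ((2 * K + 3) * (2 * K + 2))) / F)
    by (field; lra).
  unfold Rdiv; apply Rmult_le_compat_r; [left; apply Rinv_0_lt_compat; lra|].
  apply Rmult_le_compat_l; [lra|].
  apply Rmult_le_reg_r with ((2 * K + 3) * (2 * K + 2)); [lra|].
  rewrite Rmult_assoc, Rinv_l by lra; nra.
Qed.

Lemma psum_succ (x : R) (N : nat) :
  psum x (S N) = psum x N + (-1) ^ S N * Ccoef (S N) * x ^ (2 * S N).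
Proof.
  destruct N as [|N]; [|reflexivity].
  unfold Ccoef; simpl; field.
Qed.

Lemma Ccoef_term_sin_cos (x : R) (k : nat) : x <> 0 ->
  (-1) ^ k * Ccoef k * x ^ (2 * k) =
  ((-1) ^ k / INR (fact (2 * k + 1)) * (2 * x) ^ (2 * k + 1)
   + (-1) ^ k / INR (fact (2 * k + 1)) * x ^ (2 * k + 1)
   - 3 * x * ((-1) ^ k / INR (fact (2 * k)) * x ^ (2 * k))) / x.
Proof.
  intro hx; unfold Ccoef.
  rewrite Rpow_mult_distr, !pow_add, (pow_mult 2 2 k), fact_odd, !pow_1.
  replace (2 ^ 2) with 4 by ring.
  assert (0 < INR (fact (2 * k))) by apply lt_0_INR, lt_O_fact.
  assert (0 <= INR k) by apply pos_INR.
  field; lra.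
Qed.

Lemma psum_sin_cos (x : R) (N : nat) : x <> 0 ->
  psum x N = (B1 (2 * x) N + B1 x N - 3 * x * A1 x N) / x.
Proof.
  intro hx; induction N as [|N IH].
  - unfold B1, A1; simpl; field; exact hx.
  - rewrite psum_succ, IH, Ccoef_term_sin_cos by exact hx.
    unfold B1, A1; rewrite !tech5; field.
    split; [|split; [|exact hx]]; apply INR_fact_neq_0.
Qed.

Definition sin_tan_excess (x : R) : R := (sin (2 * x) + sin x - 3 * x * cos x) / x.

Lemma psum_cv (x : R) : x <> 0 -> Un_cv (psum x) (sin_tan_excess x).
Proof.
  intro hx.
  apply Un_cv_ext with (fun N => (B1 (2 * x) N + B1 x N - 3 * x * A1 x N) * / x).
  { intro N; symmetry; apply psum_sin_cos, hx. }
  apply CV_mult; [|apply Un_cv_const].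
  apply CV_minus; [apply CV_plus; apply B1_cvg|].
  apply CV_mult; [apply Un_cv_const | apply A1_cvg].
Qed.

Lemma sin_tan_excess_eq (x : R) : 0 < x < PI / 2 ->
  2 * (sin x / x) + tan x / x = 3 + sin_tan_excess x / cos x.
Proof.
  intro hx; assert (0 < cos x) by (apply cos_gt_0; lra).
  unfold sin_tan_excess, tan; rewrite sin_2a; field; lra.
Qed.

Definition excess_term (x : R) (n : nat) : R := Ccoef (n + 2) * x ^ (2 * (n + 2)).

Lemma psum_tg_alt (x : R) (n : nat) : psum x (n + 2) = sum_f_R0 (tg_alt (excess_term x)) n.
Proof.
  induction n as [|n IH].
  - unfold tg_alt, excess_term; simpl; ring.
  - rewrite tech5, <- IH; replace (S n + 2)%nat with (S (n + 2)) by lia.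
    rewrite psum_succ; unfold tg_alt, excess_term.
    replace (S (n + 2)) with (S n + 2)%nat by lia.
    rewrite pow_add; simpl (((-1) ^ 2)); ring.
Qed.

Section ExcessSeries.

Variable x : R.
Hypothesis x_pos : 0 < x.
Hypothesis x_lt_2 : x < 2.

Lemma excess_term_pos (n : nat) : 0 < excess_term x n.
Proof.
  apply Rmult_lt_0_compat; [apply Ccoef_pos; lia | apply pow_lt, x_pos].
Qed.

Lemma excess_term_ratio (n : nat) : excess_term x (S n) <= 4 / 7 * excess_term x n.
Proof.
  unfold excess_term; replace (S n + 2)%nat with (S (n + 2)) by lia.
  replace (2 * S (n + 2))%nat with (2 * (n + 2) + 2)%nat by lia.
  rewrite pow_add.
  pose proof (Ccoef_succ_le (n + 2) ltac:(lia)) as hC.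
  pose proof (Ccoef_pos (S (n + 2)) ltac:(lia)) as hC'.
  assert (hp : 0 < x ^ (2 * (n + 2))) by (apply pow_lt, x_pos).
  assert (hx2 : x ^ 2 <= 4) by (simpl; nra).
  set (c := Ccoef (n + 2)) in *; set (c' := Ccoef (S (n + 2))) in *.
  set (p := x ^ (2 * (n + 2))) in *.
  assert (c' * p * x ^ 2 <= c' * p * 4) by (apply Rmult_le_compat_l; nra).
  nra.
Qed.

Lemma excess_term_decreasing (n : nat) : excess_term x (S n) < excess_term x n.
Proof. pose proof (excess_term_ratio n); pose proof (excess_term_pos n); lra. Qed.

Lemma excess_term_cv0 : Un_cv (excess_term x) 0.
Proof.
  apply Un_cv0_of_ratio with (4 / 7); [lra | | exact excess_term_ratio].
  intro n; left; apply excess_term_pos.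
Qed.

Lemma excess_alt_cv : Un_cv (fun N => sum_f_R0 (tg_alt (excess_term x)) N) (sin_tan_excess x).
Proof.
  apply Un_cv_ext with (fun N => psum x (N + 2)); [exact (psum_tg_alt x)|].
  apply CV_shift', psum_cv; lra.
Qed.

Lemma psum_bounds (n : nat) : (1 <= n)%nat ->
  psum x (2 * n + 1) < sin_tan_excess x < psum x (2 * n).
Proof.
  intro hn; destruct n as [|j]; [lia|].
  replace (2 * S j + 1)%nat with (S (2 * j) + 2)%nat by lia.
  replace (2 * S j)%nat with (2 * j + 2)%nat by lia.
  rewrite !psum_tg_alt.
  apply alternated_series_ineq_strict;
    [exact excess_term_decreasing | exact excess_term_cv0 | exact excess_alt_cv].
Qed.

Lemma psum_error (m : nat) : (2 <= m)%nat ->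
  Rabs (sin_tan_excess x - psum x m) < Ccoef (m + 1) * x ^ (2 * m + 2).
Proof.
  intro hm; destruct m as [|[|p]]; [lia | lia|].
  replace (S (S p)) with (p + 2)%nat by lia.
  replace (p + 2 + 1)%nat with (S p + 2)%nat by lia.
  replace (2 * (p + 2) + 2)%nat with (2 * (S p + 2))%nat by lia.
  rewrite psum_tg_alt.
  exact (alternated_series_error _ _ excess_term_decreasing excess_term_cv0 excess_alt_cv p).
Qed.

End ExcessSeries.

Theorem theorem3 :
  (forall (x : R) (n : nat), 0 < x < PI / 2 -> (1 <= n)%nat ->
     approx x (2 * n + 1) < 2 * (sin x / x) + tan x / x < approx x (2 * n))
  /\
  (forall (x : R) (m : nat), 0 < x < PI / 2 -> (2 <= m)%nat ->
     Rabs (2 * (sin x / x) + tan x / x - approx x m)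
       < Ccoef (m + 1) * (x ^ (2 * m + 2) / cos x)).
Proof.
  assert (x_small : forall x, 0 < x < PI / 2 -> 0 < x /\ x < 2)
    by (intros x hx; pose proof PI_4; lra).
  assert (cos_inv_pos : forall x, 0 < x < PI / 2 -> 0 < / cos x)
    by (intros x hx; apply Rinv_0_lt_compat, cos_gt_0; lra).
  split.
  - intros x n hx hn.
    destruct (x_small x hx) as [x_pos x_lt_2].
    destruct (psum_bounds x x_pos x_lt_2 n hn) as [lo hi].
    pose proof (cos_inv_pos x hx) as hc.
    rewrite sin_tan_excess_eq by exact hx; unfold approx, Rdiv; rewrite !(Rmult_comm (/ cos x)).
    split; apply Rplus_lt_compat_l, Rmult_lt_compat_r; assumption.
  - intros x m hx hm.
    destruct (x_small x hx) as [x_pos x_lt_2].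
    pose proof (psum_error x x_pos x_lt_2 m hm) as err.
    pose proof (cos_inv_pos x hx) as hc.
    rewrite sin_tan_excess_eq by exact hx; unfold approx, Rdiv.
    replace (3 + sin_tan_excess x * / cos x - (3 + / cos x * psum x m))
      with ((sin_tan_excess x - psum x m) * / cos x) by ring.
    rewrite Rabs_mult, (Rabs_right (/ cos x)), <- Rmult_assoc by lra.
    apply Rmult_lt_compat_r; assumption.
Qed.
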